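(* Let $P$ be a path producible by a tile assembly system $\mathcal T=(T,\sigma,1)$, let $(i,j,k)$ be a shield for $P$ with cut $c$ and workspace $\mathcal C$, and let $l^k$ be the vertical ray going north from the position of $\mathrm{glue}_P(k)$. Then $$(l^k+\overrightarrow{P_jP_i})\cap\mathcal C=(l^k+\overrightarrow{P_jP_i})\cap c\subseteq\{l^k(0)+\overrightarrow{P_jP_i}\},$$ where $c$ is identified with its image.
   Context: aTAM at temperature 1: $T$ finite set of tile types; tiles $((x,y),t)\in\mathbb Z^2\times T$; adjacent tiles interact if abutting glues have equal type and strength $\ge1$; $\mathcal T=(T,\sigma,1)$ with finite connected seed $\sigma$; producible assemblies grow from $\sigma$ by single tile additions interacting with an existing tile. A path is a sequence $P=P_0P_1\dots$ of tiles with pairwise distinct positions, consecutive ones adjacent and interacting; $P_{a,\dots,b}=P_a\dots P_b$; $\overrightarrow{P_aP_b}=\mathrm{pos}(P_b)-\mathrm{pos}(P_a)$. $P$ is producible if its tiles avoid the positions of $\sigma$, $\sigma\cup\mathrm{asm}(P)$ is producible, and $P_0$ interacts with a tile of $\sigma$. $\mathrm{glue}_P(a)$ is the glue between $P_a,P_{a+1}$ with a type, a position (midpoint of the segment $\mathrm{pos}(P_a)\mathrm{pos}(P_{a+1})$) and direction (east/west/north/south according to $\mathrm{pos}(P_{a+1})-\mathrm{pos}(P_a)$). $\mathrm{emb}(P)$ is the polygonal curve through the positions of $P$. A glue pointing east or west is visible from the south (resp. north) if the vertical ray from its position downward (resp. upward) meets neither $\mathrm{emb}(P)$ nor $\sigma$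 (tile positions or unit segments between adjacent positions of $\sigma$). For a ray $l$, $l(0)$ is its starting point. Shield: $(i,j,k)$ with $0\le i<j\le k<|P|-1$ such that (1) $\mathrm{glue}_P(i),\mathrm{glue}_P(j)$ have the same type, are visible from the south and point east; (2) $\mathrm{glue}_P(k)$ is visible from the north, with $l^k$ the vertical ray from its position going north; (3) $\mathrm{emb}(P_{i,\dots,k})\cap(l^k+\overrightarrow{P_jP_i})\subseteq\{l^k(0)+\overrightarrow{P_jP_i}\}$. With $l^i$ the vertical ray from the position of $\mathrm{glue}_P(i)$ going south, the cut $c$ is the concatenation of $l^i$ traversed upward from $y=-\infty$ to the position of $\mathrm{glue}_P(i)$, the segment to $\mathrm{pos}(P_{i+1})$, $\mathrm{emb}(P_{i+1,\dots,k})$, the segment from $\mathrm{pos}(P_k)$ to the position of $\mathrm{glue}_P(k)$, and $l^k$. It is simple and its complement has two components; the workspace $\mathcal C$ is the image of $c$ together with the component containing all points $(x,0)$ with $x$ greater than every $x$-coordinate on $c$. *)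

From Stdlib Require Import Reals ZArith List Relations.
Open Scope R_scope.

Record glue := mkGlue { glabel : nat ; gstrength : nat }.
Record tiletype := mkTT { gN : glue ; gE : glue ; gS : glue ; gW : glue }.

Definition pos := (Z * Z)%type.
Definition tile := (pos * tiletype)%type.

Definition dummy_tile : tile :=
  ((0%Z, 0%Z), mkTT (mkGlue 0 0) (mkGlue 0 0) (mkGlue 0 0) (mkGlue 0 0)).

Definition pos_eqb (p q : pos) : bool :=
  (Z.eqb (fst p) (fst q) && Z.eqb (snd p) (snd q))%bool.

Definition pos_sub (p q : pos) : pos := (fst p - fst q, snd p - snd q)%Z.

Definition side_glue (t : tiletype) (d : pos) : option glue :=
  match d with
  | (Zpos xH, Z0) => Some (gE t)
  | (Zneg xH, Z0) => Some (gW t)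
  | (Z0, Zpos xH) => Some (gN t)
  | (Z0, Zneg xH) => Some (gS t)
  | _ => None
  end.

Definition interact (a b : tile) : Prop :=
  exists g, side_glue (snd a) (pos_sub (fst b) (fst a)) = Some g /\
            side_glue (snd b) (pos_sub (fst a) (fst b)) = Some g /\
            (1 <= gstrength g)%nat.

Definition adjacent (p q : pos) : Prop :=
  (Z.abs (fst p - fst q) + Z.abs (snd p - snd q) = 1)%Z.

Definition assembly := pos -> option tiletype.

Definition lookup (L : list tile) (q : pos) : option tiletype :=
  match find (fun t => pos_eqb (fst t) q) L with
  | Some t => Some (snd t)
  | None => None
  end.

Definition seed_asm (sigma : list tile) : assembly := lookup sigma.

Definition valid_seed (sigma : list tile) : Prop :=
  sigma <> nil /\ NoDup (map fst sigma) /\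
  forall a b, In a sigma -> In b sigma ->
    clos_refl_trans tile (fun x y => In x sigma /\ In y sigma /\ interact x y) a b.

Inductive producible (T : list tiletype) (sigma : assembly) : assembly -> Prop :=
| prod_seed : forall A, (forall q, A q = sigma q) -> producible T sigma A
| prod_step : forall A' A p t,
    producible T sigma A' -> A' p = None -> In t T ->
    (exists q u, A' q = Some u /\ interact (p, t) (q, u)) ->
    (forall q, A q = if pos_eqb q p then Some t else A' q) ->
    producible T sigma A.

Definition Pn (P : list tile) (a : nat) : tile := nth a P dummy_tile.

Definition is_path (P : list tile) : Prop :=
  NoDup (map fst P) /\
  forall a, (S a < length P)%nat -> interact (Pn P a) (Pn P (S a)).

Definition union_asm (sigma : list tile) (P : list tile) : assembly :=
  fun q => match lookup P q with Some t => Some t | None => seed_asm sigma q end.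

Definition producible_path (T : list tiletype) (sigma : list tile) (P : list tile) : Prop :=
  P <> nil /\ is_path P /\
  (forall a, In a P -> seed_asm sigma (fst a) = None) /\
  producible T (seed_asm sigma) (union_asm sigma P) /\
  (exists b, In b sigma /\ interact (Pn P 0) b).

Definition subpath (P : list tile) (a b : nat) : list tile :=
  firstn (S b - a) (skipn a P).

Definition point := (R * R)%type.
Definition toR (p : pos) : point := (IZR (fst p), IZR (snd p)).
Definition tpos (P : list tile) (a : nat) : point := toR (fst (Pn P a)).

Definition segment (a b : point) (z : point) : Prop :=
  exists t, 0 <= t <= 1 /\
    z = (fst a + t * (fst b - fst a), snd a + t * (snd b - snd a)).

Definition emb (P : list tile) (z : point) : Prop :=
  (exists a, (S a < length P)%nat /\ segment (tpos P a) (tpos P (S a)) z) \/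
  (exists a, (a < length P)%nat /\ z = tpos P a).

Definition seed_set (sigma : list tile) (z : point) : Prop :=
  (exists t, In t sigma /\ z = toR (fst t)) \/
  (exists t u, In t sigma /\ In u sigma /\ adjacent (fst t) (fst u) /\
               segment (toR (fst t)) (toR (fst u)) z).

Definition glue_type (P : list tile) (a : nat) : option glue :=
  side_glue (snd (Pn P a)) (pos_sub (fst (Pn P (S a))) (fst (Pn P a))).

Definition glue_pos (P : list tile) (a : nat) : point :=
  ((fst (tpos P a) + fst (tpos P (S a))) / 2,
   (snd (tpos P a) + snd (tpos P (S a))) / 2).

Definition points_east (P : list tile) (a : nat) : Prop :=
  pos_sub (fst (Pn P (S a))) (fst (Pn P a)) = (1%Z, 0%Z).
Definition points_west (P : list tile) (a : nat) : Prop :=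
  pos_sub (fst (Pn P (S a))) (fst (Pn P a)) = ((-1)%Z, 0%Z).

(* visibility (the ray minus its starting point, which lies on emb(P)) *)
Definition visible_south (sigma : list tile) (P : list tile) (a : nat) : Prop :=
  (points_east P a \/ points_west P a) /\
  forall s, 0 < s ->
    ~ emb P (fst (glue_pos P a), snd (glue_pos P a) - s) /\
    ~ seed_set sigma (fst (glue_pos P a), snd (glue_pos P a) - s).

Definition visible_north (sigma : list tile) (P : list tile) (a : nat) : Prop :=
  (points_east P a \/ points_west P a) /\
  forall s, 0 < s ->
    ~ emb P (fst (glue_pos P a), snd (glue_pos P a) + s) /\
    ~ seed_set sigma (fst (glue_pos P a), snd (glue_pos P a) + s).

Definition ray_north (o : point) (z : point) : Prop :=
  exists s, 0 <= s /\ z = (fst o, snd o + s).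
Definition ray_south (o : point) (z : point) : Prop :=
  exists s, 0 <= s /\ z = (fst o, snd o - s).

Definition vecJI (P : list tile) (i j : nat) : point :=
  (fst (tpos P i) - fst (tpos P j), snd (tpos P i) - snd (tpos P j)).

Definition translate (X : point -> Prop) (v : point) (z : point) : Prop :=
  X (fst z - fst v, snd z - snd v).

Definition lk_shift (P : list tile) (i j k : nat) : point -> Prop :=
  translate (ray_north (glue_pos P k)) (vecJI P i j).
Definition lk_shift0 (P : list tile) (i j k : nat) : point :=
  (fst (glue_pos P k) + fst (vecJI P i j), snd (glue_pos P k) + snd (vecJI P i j)).

Definition shield (sigma : list tile) (P : list tile) (i j k : nat) : Prop :=
  (i < j)%nat /\ (j <= k)%nat /\ (S k < length P)%nat /\
  glue_type P i = glue_type P j /\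
  visible_south sigma P i /\ visible_south sigma P j /\
  points_east P i /\ points_east P j /\
  visible_north sigma P k /\
  (forall z, emb (subpath P i k) z -> lk_shift P i j k z -> z = lk_shift0 P i j k).

Definition cut (P : list tile) (i k : nat) (z : point) : Prop :=
  ray_south (glue_pos P i) z \/
  segment (glue_pos P i) (tpos P (S i)) z \/
  emb (subpath P (S i) k) z \/
  segment (tpos P k) (glue_pos P k) z \/
  ray_north (glue_pos P k) z.

Definition cont_curve (f : R -> point) : Prop :=
  forall t, 0 <= t <= 1 -> forall eps, 0 < eps ->
    exists delta, 0 < delta /\
      forall s, 0 <= s <= 1 -> Rabs (s - t) < delta ->
        Rabs (fst (f s) - fst (f t)) < eps /\ Rabs (snd (f s) - snd (f t)) < eps.

Definition path_connected_in (X : point -> Prop) (a b : point) : Prop :=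
  exists f, cont_curve f /\ f 0 = a /\ f 1 = b /\
    forall t, 0 <= t <= 1 -> X (f t).

Definition workspace (c : point -> Prop) (z : point) : Prop :=
  c z \/
  exists x, (forall w, c w -> fst w < x) /\
            path_connected_in (fun w => ~ c w) (x, 0) z.

From Stdlib Require Import Reals ZArith List Lra Lia Bool Classical.
Open Scope R_scope.

(* Condition (3) of the shield takes care of the part of the cut lying on the
   path.  The shifted ray is the north ray of glue k moved horizontally by
   x_i - x_j, a nonzero integer, so it misses the north ray of glue k and the
   half edge leading to glue k.  If it meets the south ray of glue i, then glue j
   lies on the north ray of glue k, hence equals glue k by visibility, and the
   meeting point is the origin of the shifted ray.

   For the workspace we use crossing parity: the parity of the number of times
   the eastward horizontal ray from a point crosses a rectilinear curve closed
   off by two vertical rays is locally constant off the curve, hence constant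
   along paths avoiding it.  It vanishes far east of the cut and is odd on the
   shifted ray above the cut, because that ray lies west of glue k.  The same
   argument applied to the stretch of the cut between glues i and j, closed off
   by their two south rays, shows that P_i is indeed west of P_j. *)

Definition Rltb (a b : R) : bool := if Rlt_dec a b then true else false.
Definition Rleb (a b : R) : bool := if Rle_dec a b then true else false.
Definition Reqb (a b : R) : bool := if Req_dec_T a b then true else false.

Lemma between_affine (p q r : R) : Rmin p q <= r <= Rmax p q ->
  exists t, 0 <= t <= 1 /\ r = p + t * (q - p).
Proof.
  intros H. destruct (Req_dec p q) as [<-|Hpq].
  - exists 0. rewrite Rmin_left, Rmax_left in H by lra. split; lra.
  - set (t := (r - p) / (q - p)).
    assert (Ht : t * (q - p) = r - p) by (unfold t; field; lra).
    exists t. split; [|lra].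
    destruct (Rle_dec p q).
    + rewrite Rmin_left, Rmax_right in H by lra. split; nra.
    + rewrite Rmin_right, Rmax_left in H by lra. split; nra.
Qed.

Lemma segment_vertical (a b w : point) : fst a = fst b -> fst w = fst a ->
  Rmin (snd a) (snd b) <= snd w <= Rmax (snd a) (snd b) -> segment a b w.
Proof.
  intros Hab Hw Hy. destruct (between_affine _ _ _ Hy) as [t [Ht Ey]].
  exists t. split; [exact Ht|].
  apply injective_projections; simpl; rewrite <- ?Hab; lra.
Qed.

Lemma segment_horizontal (a b w : point) : snd a = snd b -> snd w = snd a ->
  Rmin (fst a) (fst b) <= fst w <= Rmax (fst a) (fst b) -> segment a b w.
Proof.
  intros Hab Hw Hx. destruct (between_affine _ _ _ Hx) as [t [Ht Ex]].
  exists t. split; [exact Ht|].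
  apply injective_projections; simpl; rewrite <- ?Hab; lra.
Qed.

(* Crossings of the eastward horizontal ray from [w].  Vertical pieces are
   half-open in y, closed at the bottom, so that a ray through a vertex counts
   like a ray slightly above it. *)
Definition crosses_segment (a b w : point) : bool :=
  Reqb (fst a) (fst b) && Rltb (fst w) (fst a) &&
  Rleb (Rmin (snd a) (snd b)) (snd w) && Rltb (snd w) (Rmax (snd a) (snd b)).
Definition crosses_ray_south (v w : point) : bool :=
  Rltb (fst w) (fst v) && Rltb (snd w) (snd v).
Definition crosses_ray_north (v w : point) : bool :=
  Rltb (fst w) (fst v) && Rleb (snd v) (snd w).
Definition on_east_ray (v w : point) : bool :=
  Rltb (fst w) (fst v) && Reqb (snd v) (snd w).

Definition separated (d : R) (v w : point) : Prop :=
  (fst v = fst w \/ fst v >= fst w + d \/ fst v <= fst w - d) /\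
  (snd v = snd w \/ snd v >= snd w + d \/ snd v <= snd w - d).

Ltac decide_comparisons :=
  repeat (match goal with
          | |- context [Rlt_dec ?a ?b] => destruct (Rlt_dec a b)
          | |- context [Rle_dec ?a ?b] => destruct (Rle_dec a b)
          | |- context [Req_dec_T ?a ?b] => destruct (Req_dec_T a b)
          end; simpl; try reflexivity; try (exfalso; lra)).

Lemma crosses_segment_change (d : R) (a b w w' : point) :
  separated d a w -> separated d b w -> (fst a = fst b \/ snd a = snd b) ->
  ~ segment a b w -> Rabs (fst w' - fst w) < d -> Rabs (snd w' - snd w) < d ->
  xorb (crosses_segment a b w) (crosses_segment a b w') =
  Rltb (snd w') (snd w) && xorb (on_east_ray a w) (on_east_ray b w).
Proof.
  destruct a as [a1 a2], b as [b1 b2], w as [w1 w2], w' as [v1 v2].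
  unfold separated, crosses_segment, on_east_ray, Rltb, Rleb, Reqb; simpl.
  intros Sa Sb Hab Hw H1 H2.
  apply Rabs_def2 in H1. apply Rabs_def2 in H2.
  destruct (Req_dec a1 b1) as [<-|Ex].
  - assert (Hy : w2 < Rmin a2 b2 \/ w2 > Rmax a2 b2 \/ a1 <> w1).
    { destruct (Req_dec a1 w1); [|auto].
      destruct (Rlt_dec w2 (Rmin a2 b2)); [auto|].
      destruct (Rgt_dec w2 (Rmax a2 b2)); [auto|].
      exfalso; apply Hw; apply segment_vertical; simpl; auto; lra. }
    destruct (Rle_dec a2 b2);
      [rewrite Rmin_left, Rmax_right in * by lra|rewrite Rmin_right, Rmax_left in * by lra];
      destruct Sa as [[Sa|[Sa|Sa]] [Sa'|[Sa'|Sa']]];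
      destruct Sb as [_ [Sb'|[Sb'|Sb']]]; decide_comparisons.
  - destruct Hab as [Hab|Hab]; simpl in Hab; [contradiction|]. subst b2.
    assert (Hx : a2 <> w2 \/ w1 < Rmin a1 b1 \/ w1 > Rmax a1 b1).
    { destruct (Req_dec a2 w2); [|auto].
      destruct (Rlt_dec w1 (Rmin a1 b1)); [auto|].
      destruct (Rgt_dec w1 (Rmax a1 b1)); [auto|].
      exfalso; apply Hw; apply segment_horizontal; simpl; auto; lra. }
    destruct (Rle_dec a1 b1);
      [rewrite Rmin_left, Rmax_right in * by lra|rewrite Rmin_right, Rmax_left in * by lra];
      decide_comparisons.
Qed.

Lemma crosses_ray_south_change (d : R) (v w w' : point) :
  separated d v w -> ~ ray_south v w ->
  Rabs (fst w' - fst w) < d -> Rabs (snd w' - snd w) < d ->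
  xorb (crosses_ray_south v w) (crosses_ray_south v w') = Rltb (snd w') (snd w) && on_east_ray v w.
Proof.
  destruct v as [a1 a2], w as [w1 w2], w' as [v1 v2].
  unfold separated, crosses_ray_south, on_east_ray, Rltb, Reqb, ray_south; simpl.
  intros Sv Hw H1 H2.
  apply Rabs_def2 in H1. apply Rabs_def2 in H2.
  assert (Hy : a1 <> w1 \/ w2 > a2).
  { destruct (Req_dec a1 w1); [|auto]. destruct (Rgt_dec w2 a2); [auto|].
    exfalso; apply Hw. exists (a2 - w2). split; [lra|]. f_equal; lra. }
  destruct Sv as [[Sv|[Sv|Sv]] [Sv'|[Sv'|Sv']]]; decide_comparisons.
Qed.

Lemma crosses_ray_north_change (d : R) (v w w' : point) :
  separated d v w -> ~ ray_north v w ->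
  Rabs (fst w' - fst w) < d -> Rabs (snd w' - snd w) < d ->
  xorb (crosses_ray_north v w) (crosses_ray_north v w') = Rltb (snd w') (snd w) && on_east_ray v w.
Proof.
  destruct v as [a1 a2], w as [w1 w2], w' as [v1 v2].
  unfold separated, crosses_ray_north, on_east_ray, Rltb, Rleb, Reqb, ray_north; simpl.
  intros Sv Hw H1 H2.
  apply Rabs_def2 in H1. apply Rabs_def2 in H2.
  assert (Hy : a1 <> w1 \/ w2 < a2).
  { destruct (Req_dec a1 w1); [|auto]. destruct (Rlt_dec w2 a2); [auto|].
    exfalso; apply Hw. exists (w2 - a2). split; [lra|]. f_equal; lra. }
  destruct Sv as [[Sv|[Sv|Sv]] [Sv'|[Sv'|Sv']]]; decide_comparisons.
Qed.

Fixpoint polyline_crossings (u : nat -> point) (n : nat) (w : point) : bool :=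
  match n with
  | O => false
  | S n => xorb (polyline_crossings u n w) (crosses_segment (u n) (u (S n)) w)
  end.

Definition crossing_parity (u : nat -> point) (n : nat) (up : bool) (w : point) : bool :=
  xorb (xorb (crosses_ray_south (u O) w) (polyline_crossings u n w))
       (if up then crosses_ray_north (u n) w else crosses_ray_south (u n) w).

Definition rayed_polyline (u : nat -> point) (n : nat) (up : bool) (z : point) : Prop :=
  ray_south (u O) z \/ (exists m, (m < n)%nat /\ segment (u m) (u (S m)) z) \/
  (if up then ray_north (u n) z else ray_south (u n) z).

Definition axis_parallel (u : nat -> point) (n : nat) : Prop :=
  forall m, (m < n)%nat -> fst (u m) = fst (u (S m)) \/ snd (u m) = snd (u (S m)).

Lemma vertex_in_rayed_polyline u n up m : (m <= n)%nat -> rayed_polyline u n up (u m).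
Proof.
  intros H. destruct m as [|m].
  - left. exists 0. split; [lra|]. destruct (u 0%nat); simpl; f_equal; ring.
  - right; left. exists m. split; [lia|]. exists 1. split; [lra|].
    destruct (u m), (u (S m)); simpl; f_equal; ring.
Qed.

Lemma polyline_crossings_change (d : R) u n w w' :
  (forall m, (m <= n)%nat -> separated d (u m) w) -> axis_parallel u n ->
  (forall m, (m < n)%nat -> ~ segment (u m) (u (S m)) w) ->
  Rabs (fst w' - fst w) < d -> Rabs (snd w' - snd w) < d ->
  xorb (polyline_crossings u n w) (polyline_crossings u n w') =
  Rltb (snd w') (snd w) && xorb (on_east_ray (u O) w) (on_east_ray (u n) w).
Proof.
  intros Sep A Hw H1 H2. induction n as [|n IH]; simpl.
  - rewrite xorb_nilpotent. destruct (Rltb _ _); reflexivity.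
  - assert (E := crosses_segment_change d (u n) (u (S n)) w w' (Sep n ltac:(lia))
                   (Sep (S n) ltac:(lia)) (A n ltac:(lia)) (Hw n ltac:(lia)) H1 H2).
    assert (IH' : xorb (polyline_crossings u n w) (polyline_crossings u n w') =
       Rltb (snd w') (snd w) && xorb (on_east_ray (u 0%nat) w) (on_east_ray (u n) w)).
    { apply IH; intros m Hm; [apply Sep|apply A|apply Hw]; lia. }
    revert E IH'.
    destruct (polyline_crossings u n w), (polyline_crossings u n w'),
      (crosses_segment (u n) (u (S n)) w), (crosses_segment (u n) (u (S n)) w'),
      (Rltb _ _), (on_east_ray (u 0%nat) w), (on_east_ray (u n) w),
      (on_east_ray (u (S n)) w); simpl; congruence.
Qed.

Lemma separated_exists (v w : point) : exists d, 0 < d /\ separated d v w.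
Proof.
  set (dx := Rabs (fst v - fst w)). set (dy := Rabs (snd v - snd w)).
  assert (Dx : fst v = fst w \/ 0 < dx /\ (fst v >= fst w + dx \/ fst v <= fst w - dx)).
  { unfold dx, Rabs; destruct Rcase_abs; lra. }
  assert (Dy : snd v = snd w \/ 0 < dy /\ (snd v >= snd w + dy \/ snd v <= snd w - dy)).
  { unfold dy, Rabs; destruct Rcase_abs; lra. }
  unfold separated.
  destruct Dx as [Ex|[Px Ex]], Dy as [Ey|[Py Ey]].
  - exists 1. split; [lra|]. auto.
  - exists dy. split; [lra|]. auto.
  - exists dx. split; [lra|]. auto.
  - exists (Rmin dx dy). pose proof (Rmin_l dx dy). pose proof (Rmin_r dx dy).
    pose proof (Rmin_glb_lt dx dy 0 Px Py). split; [lra|]. split; right; lra.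
Qed.

Lemma separated_le d d' v w : separated d v w -> 0 < d' <= d -> separated d' v w.
Proof. unfold separated; intros [[A|[A|A]] [B|[B|B]]] H; split; lra. Qed.

Lemma separated_vertices (u : nat -> point) n w :
  exists d, 0 < d /\ forall m, (m <= n)%nat -> separated d (u m) w.
Proof.
  induction n as [|n [d [Hd Sep]]].
  - destruct (separated_exists (u O) w) as [d [Hd Sep]]. exists d; split; auto.
    intros m Hm. replace m with O by lia. auto.
  - destruct (separated_exists (u (S n)) w) as [d' [Hd' Sep']].
    exists (Rmin d d'). pose proof (Rmin_l d d'). pose proof (Rmin_r d d').
    pose proof (Rmin_glb_lt d d' 0 Hd Hd'). split; [lra|].
    intros m Hm. destruct (Nat.eq_dec m (S n)) as [->|].
    + apply separated_le with d'; auto; lra.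
    + apply separated_le with d; [apply Sep; lia|lra].
Qed.

(* Going down past a vertex lying on the eastward ray of [w], the ray gains or
   loses a crossing on each of the two pieces meeting there; these cancel. *)
Lemma crossing_parity_locally_constant u n up w :
  axis_parallel u n -> ~ rayed_polyline u n up w ->
  exists d, 0 < d /\ forall w', Rabs (fst w' - fst w) < d -> Rabs (snd w' - snd w) < d ->
    crossing_parity u n up w' = crossing_parity u n up w.
Proof.
  intros A Hw. destruct (separated_vertices u n w) as [d [Hd Sep]].
  exists d; split; auto. intros w' H1 H2.
  assert (Poly : xorb (polyline_crossings u n w) (polyline_crossings u n w') =
    Rltb (snd w') (snd w) && xorb (on_east_ray (u O) w) (on_east_ray (u n) w)).
  { apply polyline_crossings_change with d; auto.
    intros m Hm Hs; apply Hw; right; left; eauto. }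
  assert (South0 : xorb (crosses_ray_south (u O) w) (crosses_ray_south (u O) w') =
    Rltb (snd w') (snd w) && on_east_ray (u O) w).
  { apply (crosses_ray_south_change d); [apply Sep; lia| |exact H1|exact H2].
    intros H; apply Hw; left; exact H. }
  unfold crossing_parity. destruct up.
  - assert (North : xorb (crosses_ray_north (u n) w) (crosses_ray_north (u n) w') =
      Rltb (snd w') (snd w) && on_east_ray (u n) w).
    { apply (crosses_ray_north_change d); [apply Sep; lia| |exact H1|exact H2].
      intros H; apply Hw; right; right; exact H. }
    revert Poly South0 North.
    destruct (polyline_crossings u n w), (polyline_crossings u n w'),
      (crosses_ray_south (u O) w), (crosses_ray_south (u O) w'),
      (crosses_ray_north (u n) w), (crosses_ray_north (u n) w'), (Rltb _ _),
      (on_east_ray (u O) w), (on_east_ray (u n) w); simpl; congruence.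
  - assert (South : xorb (crosses_ray_south (u n) w) (crosses_ray_south (u n) w') =
      Rltb (snd w') (snd w) && on_east_ray (u n) w).
    { apply (crosses_ray_south_change d); [apply Sep; lia| |exact H1|exact H2].
      intros H; apply Hw; right; right; exact H. }
    revert Poly South0 South.
    destruct (polyline_crossings u n w), (polyline_crossings u n w'),
      (crosses_ray_south (u O) w), (crosses_ray_south (u O) w'),
      (crosses_ray_south (u n) w), (crosses_ray_south (u n) w'), (Rltb _ _),
      (on_east_ray (u O) w), (on_east_ray (u n) w); simpl; congruence.
Qed.

Lemma locally_constant_bool_unit_interval (g : R -> bool) :
  (forall t, 0 <= t <= 1 -> exists eta, 0 < eta /\
     forall s, 0 <= s <= 1 -> Rabs (s - t) < eta -> g s = g t) -> g 1 = g 0.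
Proof.
  intros Hloc.
  set (E := fun t => 0 <= t <= 1 /\ forall s, 0 <= s <= t -> g s = g 0).
  assert (E0 : E 0).
  { split; [lra|]. intros s Hs. replace s with 0 by lra. reflexivity. }
  assert (Eb : bound E) by (exists 1; intros x [Hx _]; lra).
  destruct (completeness E Eb (ex_intro _ 0 E0)) as [S [Sub Sleast]].
  assert (S0 : 0 <= S) by (apply Sub; exact E0).
  assert (S1 : S <= 1) by (apply Sleast; intros x [Hx _]; lra).
  destruct (Hloc S (conj S0 S1)) as [eta [Heta Heq]].
  assert (Near : exists t, E t /\ S - eta < t).
  { apply NNPP; intro N. assert (S <= S - eta); [|lra].
    apply Sleast. intros x Ex. destruct (Rle_dec x (S - eta)); auto.
    exfalso; apply N; exists x; split; auto; lra. }
  destruct Near as [t [[Ht Et] Htlo]].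
  assert (tS : t <= S) by (apply Sub; split; auto).
  assert (gS : g S = g 0).
  { rewrite <- (Heq t); [apply Et; lra|lra|]. rewrite Rabs_left1; lra. }
  pose proof (Rmin_l 1 (S + eta / 2)). pose proof (Rmin_r 1 (S + eta / 2)).
  set (t' := Rmin 1 (S + eta / 2)) in *.
  assert (t'_cases : t' = 1 \/ t' = S + eta / 2) by (unfold t', Rmin; destruct Rle_dec; auto).
  assert (Et' : E t').
  { split; [destruct t'_cases; lra|].
    intros s Hs. destruct (Rle_dec s t); [apply Et; lra|].
    rewrite Heq, gS; [reflexivity|lra|]. apply Rabs_def1; lra. }
  assert (t' <= S) by (apply Sub; exact Et').
  assert (S = 1) by (destruct t'_cases; lra).
  subst S. exact gS.
Qed.

Lemma crossing_parity_along_curve u n up f : axis_parallel u n -> cont_curve f ->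
  (forall t, 0 <= t <= 1 -> ~ rayed_polyline u n up (f t)) ->
  crossing_parity u n up (f 1) = crossing_parity u n up (f 0).
Proof.
  intros A Hf Hoff.
  apply (locally_constant_bool_unit_interval (fun t => crossing_parity u n up (f t))).
  intros t Ht.
  destruct (crossing_parity_locally_constant u n up (f t) A (Hoff t Ht)) as [d [Hd Hloc]].
  destruct (Hf t Ht d Hd) as [eta [Heta Hclose]].
  exists eta; split; auto. intros s Hs Hst.
  destruct (Hclose s Hs Hst). apply Hloc; auto.
Qed.

Definition segment_curve (a b : point) (t : R) : point :=
  (fst a + t * (fst b - fst a), snd a + t * (snd b - snd a)).

Lemma cont_segment_curve a b : cont_curve (segment_curve a b).
Proof.
  intros t Ht eps Heps.
  pose proof (Rabs_pos (fst b - fst a)). pose proof (Rabs_pos (snd b - snd a)).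
  set (dx := Rabs (fst b - fst a)) in *. set (dy := Rabs (snd b - snd a)) in *.
  set (K := dx + dy + 1).
  assert (HK : eps / K * K = eps) by (field; unfold K; lra).
  assert (Hdelta : 0 < eps / K) by (apply Rdiv_lt_0_compat; unfold K; lra).
  set (delta := eps / K) in *.
  exists delta. split; [exact Hdelta|].
  intros s Hs Hst. unfold segment_curve; simpl.
  pose proof (Rabs_pos (s - t)).
  replace (fst a + s * (fst b - fst a) - (fst a + t * (fst b - fst a)))
    with ((s - t) * (fst b - fst a)) by ring.
  replace (snd a + s * (snd b - snd a) - (snd a + t * (snd b - snd a)))
    with ((s - t) * (snd b - snd a)) by ring.
  rewrite !Rabs_mult. fold dx dy. unfold K in HK. split; nra.
Qed.

Lemma crossing_parity_along_segment u n up a b : axis_parallel u n ->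
  (forall z, segment a b z -> ~ rayed_polyline u n up z) ->
  crossing_parity u n up a = crossing_parity u n up b.
Proof.
  intros A Hoff.
  assert (E := crossing_parity_along_curve u n up (segment_curve a b) A (cont_segment_curve a b)).
  replace (segment_curve a b 0) with a in E
    by (destruct a; unfold segment_curve; simpl; f_equal; ring).
  replace (segment_curve a b 1) with b in E
    by (destruct a, b; unfold segment_curve; simpl; f_equal; ring).
  symmetry; apply E. intros t Ht. apply Hoff. exists t. split; auto.
Qed.

Lemma polyline_crossings_east u n w :
  (forall m, (m <= n)%nat -> fst (u m) <= fst w) -> polyline_crossings u n w = false.
Proof.
  induction n; simpl; intros H; auto. rewrite IHn by (intros; apply H; lia).
  unfold crosses_segment, Rltb. destruct (Rlt_dec (fst w) (fst (u n))).
  - specialize (H n ltac:(lia)). lra.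
  - rewrite !andb_false_r, andb_false_l. reflexivity.
Qed.

Lemma crossing_parity_east u n up w :
  (forall m, (m <= n)%nat -> fst (u m) <= fst w) -> crossing_parity u n up w = false.
Proof.
  intros H. unfold crossing_parity. rewrite polyline_crossings_east by auto.
  assert (H0 := H O ltac:(lia)). assert (Hn := H n ltac:(lia)).
  unfold crosses_ray_south, crosses_ray_north, Rltb.
  destruct (Rlt_dec (fst w) (fst (u O))); [lra|].
  destruct (Rlt_dec (fst w) (fst (u n))); [lra|]. destruct up; reflexivity.
Qed.

Lemma polyline_crossings_north u n w :
  (forall m, (m <= n)%nat -> snd (u m) < snd w) -> polyline_crossings u n w = false.
Proof.
  induction n; simpl; intros H; auto. rewrite IHn by (intros; apply H; lia).
  unfold crosses_segment, Rltb. destruct (Rlt_dec (snd w) (Rmax (snd (u n)) (snd (u (S n))))).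
  - exfalso. assert (H1 := H n ltac:(lia)). assert (H2 := H (S n) ltac:(lia)).
    unfold Rmax in r; destruct Rle_dec in r; lra.
  - rewrite !andb_false_r. reflexivity.
Qed.

Lemma crossing_parity_north u n up w :
  (forall m, (m <= n)%nat -> snd (u m) < snd w) ->
  crossing_parity u n up w = if up then Rltb (fst w) (fst (u n)) else false.
Proof.
  intros H. unfold crossing_parity. rewrite polyline_crossings_north by auto.
  assert (H0 := H O ltac:(lia)). assert (Hn := H n ltac:(lia)).
  unfold crosses_ray_south, crosses_ray_north, Rltb, Rleb.
  destruct (Rlt_dec (snd w) (snd (u O))); [lra|].
  destruct (Rlt_dec (snd w) (snd (u n))); [lra|].
  destruct (Rle_dec (snd (u n)) (snd w)); [|lra].
  rewrite !andb_false_r. destruct up; simpl; auto.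
  destruct (Rlt_dec (fst w) (fst (u n))); auto.
Qed.

Lemma polyline_crossings_south u n w :
  (forall m, (m <= n)%nat -> snd w < snd (u m)) -> polyline_crossings u n w = false.
Proof.
  induction n; simpl; intros H; auto. rewrite IHn by (intros; apply H; lia).
  unfold crosses_segment, Rleb. destruct (Rle_dec (Rmin (snd (u n)) (snd (u (S n)))) (snd w)).
  - exfalso. assert (H1 := H n ltac:(lia)). assert (H2 := H (S n) ltac:(lia)).
    unfold Rmin in r; destruct Rle_dec in r; lra.
  - rewrite !andb_false_r. reflexivity.
Qed.

Lemma crossing_parity_south u n w :
  (forall m, (m <= n)%nat -> snd w < snd (u m)) ->
  crossing_parity u n false w = xorb (Rltb (fst w) (fst (u O))) (Rltb (fst w) (fst (u n))).
Proof.
  intros H. unfold crossing_parity. rewrite polyline_crossings_south by auto.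
  assert (H0 := H O ltac:(lia)). assert (Hn := H n ltac:(lia)).
  unfold crosses_ray_south, Rltb.
  destruct (Rlt_dec (snd w) (snd (u O))); [|lra].
  destruct (Rlt_dec (snd w) (snd (u n))); [|lra].
  rewrite !andb_true_r. simpl. destruct (Rlt_dec (fst w) (fst (u O))); auto.
Qed.

Lemma vertices_bounded_y (u : nat -> point) n :
  exists Y, forall m, (m <= n)%nat -> Rabs (snd (u m)) < Y.
Proof.
  induction n as [|n [Y HY]].
  - exists (Rabs (snd (u O)) + 1). intros m Hm. replace m with O by lia. lra.
  - exists (Rmax Y (Rabs (snd (u (S n))) + 1)). intros m Hm.
    pose proof (Rmax_l Y (Rabs (snd (u (S n))) + 1)).
    pose proof (Rmax_r Y (Rabs (snd (u (S n))) + 1)).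
    destruct (Nat.eq_dec m (S n)) as [->|]; [lra|].
    specialize (HY m ltac:(lia)). lra.
Qed.

Definition unit_step (a b : Z * Z) : Prop :=
  (fst b = fst a + 1 /\ snd b = snd a)%Z \/ (fst b = fst a - 1 /\ snd b = snd a)%Z \/
  (fst b = fst a /\ snd b = snd a + 1)%Z \/ (fst b = fst a /\ snd b = snd a - 1)%Z.

Definition same_pair (a b c d : Z * Z) : Prop := (a = c /\ b = d) \/ (a = d /\ b = c).

Definition lattice_midpoint (a b : Z * Z) : point :=
  ((IZR (fst a) + IZR (fst b)) / 2, (IZR (snd a) + IZR (snd b)) / 2).
Definition hpoint (L : Z * Z) (t : R) : point := (IZR (fst L) + t, IZR (snd L)).
Definition vpoint (L : Z * Z) (t : R) : point := (IZR (fst L), IZR (snd L) + t).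

Lemma IZR_unit_interval (n : Z) (t : R) : IZR n = t -> 0 <= t <= 1 ->
  (n = 0%Z /\ t = 0) \/ (n = 1%Z /\ t = 1).
Proof.
  intros <- H. assert (A : (0 <= n <= 1)%Z) by (split; apply le_IZR; lra).
  destruct (Z.eq_dec n 0) as [->|]; [left; auto|].
  assert (n = 1%Z) as -> by lia. right; auto.
Qed.

Lemma IZR_abs_lt_1 (n : Z) (t : R) : IZR n = t -> -1 < t < 1 -> n = 0%Z.
Proof. intros <- H. assert (A : (-1 < n < 1)%Z) by (split; apply lt_IZR; lra). lia. Qed.

Lemma IZR_neq_half (n : Z) : IZR n <> /2.
Proof. intros E. assert (A : (0 < n < 1)%Z) by (split; apply lt_IZR; lra). lia. Qed.

Lemma same_pair_trans a b c d x y :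
  same_pair a b x y -> same_pair c d x y -> same_pair a b c d.
Proof. unfold same_pair; intros [[-> ->]|[-> ->]] [[-> ->]|[-> ->]]; auto. Qed.

Lemma unit_segment_normal_form a b z : unit_step a b -> segment (toR a) (toR b) z ->
  exists L t, 0 <= t <= 1 /\
   ((z = hpoint L t /\ same_pair a b L (fst L + 1, snd L)%Z /\
     lattice_midpoint a b = hpoint L (/2)) \/
    (z = vpoint L t /\ same_pair a b L (fst L, snd L + 1)%Z /\
     lattice_midpoint a b = vpoint L (/2))).
Proof.
  destruct a as [a1 a2], b as [b1 b2].
  unfold unit_step, toR, same_pair, lattice_midpoint, hpoint, vpoint; simpl.
  intros U [t [Ht ->]]. simpl.
  destruct U as [[-> ->]|[[-> ->]|[[-> ->]|[-> ->]]]]; rewrite ?plus_IZR, ?minus_IZR.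
  - exists (a1, a2), t; simpl. split; auto. left. split; [f_equal; ring|].
    split; [left; auto|f_equal; field].
  - exists (a1 - 1, a2)%Z, (1 - t); simpl. split; [lra|]. left.
    rewrite minus_IZR. split; [f_equal; ring|].
    split; [right; split; f_equal; lia|f_equal; field].
  - exists (a1, a2), t; simpl. split; auto. right. split; [f_equal; ring|].
    split; [left; auto|f_equal; field].
  - exists (a1, a2 - 1)%Z, (1 - t); simpl. split; [lra|]. right.
    rewrite minus_IZR. split; [f_equal; ring|].
    split; [right; split; f_equal; lia|f_equal; field].
Qed.

Lemma unit_segment_lattice_point a b p : unit_step a b ->
  segment (toR a) (toR b) (toR p) -> p = a \/ p = b.
Proof.
  intros U S.
  destruct (unit_segment_normal_form a b _ U S) as [[l1 l2] [t [Ht [[E [Q _]]|[E [Q _]]]]]];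
    destruct p as [p1 p2]; unfold toR, hpoint, vpoint in E; simpl in E;
    injection E; intros Ey Ex.
  - apply eq_IZR in Ey. assert (F : IZR (p1 - l1) = t) by (rewrite minus_IZR; lra).
    destruct (IZR_unit_interval _ _ F Ht) as [[F0 _]|[F0 _]];
      destruct Q as [[-> ->]|[-> ->]]; [left|right|right|left]; simpl; f_equal; lia.
  - apply eq_IZR in Ex. assert (F : IZR (p2 - l2) = t) by (rewrite minus_IZR; lra).
    destruct (IZR_unit_interval _ _ F Ht) as [[F0 _]|[F0 _]];
      destruct Q as [[-> ->]|[-> ->]]; [left|right|right|left]; simpl; f_equal; lia.
Qed.

Lemma hpoint_off_lattice L t : 0 <= t <= 1 -> (forall p, hpoint L t <> toR p) -> 0 < t < 1.
Proof.
  unfold hpoint, toR. intros Ht Hoff. split; apply Rnot_le_lt; intros Hle.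
  - apply (Hoff L). f_equal; lra.
  - apply (Hoff (fst L + 1, snd L)%Z); simpl. rewrite plus_IZR. f_equal; lra.
Qed.

Lemma vpoint_off_lattice L t : 0 <= t <= 1 -> (forall p, vpoint L t <> toR p) -> 0 < t < 1.
Proof.
  unfold vpoint, toR. intros Ht Hoff. split; apply Rnot_le_lt; intros Hle.
  - apply (Hoff L). f_equal; lra.
  - apply (Hoff (fst L, snd L + 1)%Z); simpl. rewrite plus_IZR. f_equal; lra.
Qed.

Lemma unit_segments_meet_off_lattice a b c d z : unit_step a b -> unit_step c d ->
  segment (toR a) (toR b) z -> segment (toR c) (toR d) z ->
  (forall p, z <> toR p) -> same_pair a b c d.
Proof.
  intros U1 U2 S1 S2 Hoff.
  destruct (unit_segment_normal_form a b z U1 S1) as [[l1 l2] [t [Ht H1]]].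
  destruct (unit_segment_normal_form c d z U2 S2) as [[m1 m2] [s [Hs H2]]].
  destruct H1 as [[E1 [Q1 _]]|[E1 [Q1 _]]], H2 as [[E2 [Q2 _]]|[E2 [Q2 _]]];
    subst z; [| exfalso | exfalso |].
  - pose proof (hpoint_off_lattice _ _ Ht Hoff) as Ht'. rewrite E2 in Hoff.
    pose proof (hpoint_off_lattice _ _ Hs Hoff) as Hs'.
    unfold hpoint in E2; simpl in E2. injection E2; intros Ey Ex.
    apply eq_IZR in Ey. subst m2.
    assert (F : IZR (l1 - m1) = s - t) by (rewrite minus_IZR; lra).
    assert (D : (l1 - m1 = 0)%Z) by (apply (IZR_abs_lt_1 _ _ F); lra).
    assert (l1 = m1) as <- by lia.
    eapply same_pair_trans; [exact Q1|exact Q2].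
  - apply (Hoff (m1, l2)). rewrite E2. unfold vpoint, toR. simpl.
    unfold hpoint in E2; simpl in E2. injection E2; intros. f_equal; lra.
  - apply (Hoff (l1, m2)). unfold vpoint, toR. simpl.
    unfold hpoint, vpoint in E2; simpl in E2. injection E2; intros. f_equal; lra.
  - pose proof (vpoint_off_lattice _ _ Ht Hoff) as Ht'. rewrite E2 in Hoff.
    pose proof (vpoint_off_lattice _ _ Hs Hoff) as Hs'.
    unfold vpoint in E2; simpl in E2. injection E2; intros Ey Ex.
    apply eq_IZR in Ex. subst m1.
    assert (F : IZR (l2 - m2) = s - t) by (rewrite minus_IZR; lra).
    assert (D : (l2 - m2 = 0)%Z) by (apply (IZR_abs_lt_1 _ _ F); lra).
    assert (l2 = m2) as <- by lia.
    eapply same_pair_trans; [exact Q1|exact Q2].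
Qed.

Definition ppos (P : list tile) (m : nat) : Z * Z := fst (Pn P m).

Definition edge (P : list tile) (m : nat) (z : point) : Prop :=
  segment (tpos P m) (tpos P (S m)) z.

Lemma tpos_xy P m : tpos P m = (IZR (fst (ppos P m)), IZR (snd (ppos P m))).
Proof. reflexivity. Qed.

Lemma glue_pos_midpoint P m : glue_pos P m = lattice_midpoint (ppos P m) (ppos P (S m)).
Proof. reflexivity. Qed.

Lemma side_glue_unit t d g : side_glue t d = Some g ->
  d = (1, 0)%Z \/ d = (-1, 0)%Z \/ d = (0, 1)%Z \/ d = (0, -1)%Z.
Proof.
  destruct d as [x y]. unfold side_glue.
  destruct x as [|[p|p|]|[p|p|]]; destruct y as [|[q|q|]|[q|q|]]; try discriminate; auto.
Qed.

Lemma path_unit_step P m : is_path P -> (S m < length P)%nat ->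
  unit_step (ppos P m) (ppos P (S m)).
Proof.
  intros [_ H] Hm. destruct (H m Hm) as [g [G _]].
  apply side_glue_unit in G. unfold ppos, unit_step, pos_sub in *.
  destruct (fst (Pn P m)) as [a1 a2], (fst (Pn P (S m))) as [b1 b2]; simpl in *.
  destruct G as [G|[G|[G|G]]]; injection G; intros; lia.
Qed.

Lemma path_ppos_inj P m n : is_path P -> (m < length P)%nat -> (n < length P)%nat ->
  ppos P m = ppos P n -> m = n.
Proof.
  intros [Hnd _] Hm Hn E.
  apply (proj1 (NoDup_nth (map fst P) (fst dummy_tile)) Hnd m n);
    rewrite ?length_map; auto.
  rewrite !map_nth. exact E.
Qed.

Lemma glue_in_edge P m : edge P m (glue_pos P m).
Proof.
  unfold edge, glue_pos. exists (/2). split; [lra|].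
  destruct (tpos P m), (tpos P (S m)); simpl. f_equal; field.
Qed.

Lemma glue_off_lattice P m : is_path P -> (S m < length P)%nat ->
  forall p, glue_pos P m <> toR p.
Proof.
  intros HP Hm p E.
  destruct (unit_segment_normal_form _ _ _ (path_unit_step P m HP Hm) (glue_in_edge P m))
    as [L [t [_ [[_ [_ M]]|[_ [_ M]]]]]];
    rewrite <- glue_pos_midpoint, E in M; unfold toR, hpoint, vpoint in M;
    injection M; intros M2 M1.
  - apply (IZR_neq_half (fst p - fst L)). rewrite minus_IZR. lra.
  - apply (IZR_neq_half (snd p - snd L)). rewrite minus_IZR. lra.
Qed.

Lemma path_edges_meet P m n z : is_path P ->
  (S m < length P)%nat -> (S n < length P)%nat -> (m < n)%nat ->
  edge P m z -> edge P n z -> n = S m /\ z = tpos P n.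
Proof.
  intros HP Hm Hn Hmn E1 E2.
  assert (Inj : forall a b, (a < length P)%nat -> (b < length P)%nat ->
                  ppos P a = ppos P b -> a = b) by (intros; apply (path_ppos_inj P); auto).
  destruct (classic (exists p, z = toR p)) as [[p ->]|Hoff].
  - destruct (unit_segment_lattice_point _ _ p (path_unit_step P m HP Hm) E1) as [Ep|Ep];
      destruct (unit_segment_lattice_point _ _ p (path_unit_step P n HP Hn) E2) as [Eq|Eq];
      assert (X := eq_trans (eq_sym Ep) Eq); apply Inj in X; try lia.
    subst. split; reflexivity.
  - destruct (unit_segments_meet_off_lattice _ _ _ _ z (path_unit_step P m HP Hm)
                (path_unit_step P n HP Hn) E1 E2 (fun p E => Hoff (ex_intro _ p E)))
      as [[A _]|[A _]]; apply Inj in A; lia.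
Qed.

Lemma glue_pos_inj P m n : is_path P -> (S m < length P)%nat -> (S n < length P)%nat ->
  glue_pos P m = glue_pos P n -> m = n.
Proof.
  intros HP Hm Hn E.
  assert (G1 := glue_in_edge P m). rewrite E in G1.
  destruct (unit_segments_meet_off_lattice _ _ _ _ _ (path_unit_step P m HP Hm)
              (path_unit_step P n HP Hn) G1 (glue_in_edge P n) (glue_off_lattice P n HP Hn))
    as [[A _]|[A B]].
  - apply (path_ppos_inj P); auto; lia.
  - assert (m = S n) by (apply (path_ppos_inj P); auto; lia).
    assert (S m = n) by (apply (path_ppos_inj P); auto; lia).
    lia.
Qed.

Lemma edge_fractional_x P m z x : is_path P -> (S m < length P)%nat -> edge P m z ->
  IZR x < fst z < IZR x + 1 -> glue_pos P m = (IZR x + /2, snd z).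
Proof.
  intros HP Hm E H.
  destruct (unit_segment_normal_form _ _ _ (path_unit_step P m HP Hm) E)
    as [L [t [Ht [[Z1 [_ M]]|[Z1 [_ M]]]]]];
    rewrite <- glue_pos_midpoint in M; rewrite M; subst z; unfold hpoint, vpoint in *;
    simpl in *.
  - assert (F : IZR (fst L - x) = IZR (fst L) - IZR x) by (rewrite minus_IZR; auto).
    assert (fst L - x = 0)%Z by (apply (IZR_abs_lt_1 _ _ F); lra).
    assert (fst L = x) as -> by lia. reflexivity.
  - exfalso. assert (F : (0 < fst L - x < 1)%Z).
    { split; apply lt_IZR; rewrite minus_IZR; simpl; lra. }
    lia.
Qed.

Lemma ppos_east P m : points_east P m ->
  ppos P (S m) = (fst (ppos P m) + 1, snd (ppos P m))%Z.
Proof.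
  unfold points_east, pos_sub, ppos. destruct (fst (Pn P (S m))), (fst (Pn P m)); simpl.
  intros E; injection E; intros; f_equal; lia.
Qed.

Lemma ppos_west P m : points_west P m ->
  ppos P (S m) = (fst (ppos P m) - 1, snd (ppos P m))%Z.
Proof.
  unfold points_west, pos_sub, ppos. destruct (fst (Pn P (S m))), (fst (Pn P m)); simpl.
  intros E; injection E; intros; f_equal; lia.
Qed.

Lemma glue_pos_east P m : points_east P m ->
  glue_pos P m = (IZR (fst (ppos P m)) + /2, IZR (snd (ppos P m))).
Proof.
  intros E. rewrite glue_pos_midpoint, (ppos_east P m E). unfold lattice_midpoint; simpl.
  rewrite plus_IZR. f_equal; field.
Qed.

Lemma glue_pos_west P m : points_west P m ->
  glue_pos P m = (IZR (fst (ppos P m)) - /2, IZR (snd (ppos P m))).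
Proof.
  intros E. rewrite glue_pos_midpoint, (ppos_west P m E). unfold lattice_midpoint; simpl.
  rewrite minus_IZR. f_equal; field.
Qed.

Lemma edge_in_emb P m z : (S m < length P)%nat -> edge P m z -> emb P z.
Proof. intros H E. left. exists m. auto. Qed.

Lemma glue_in_emb P m : (S m < length P)%nat -> emb P (glue_pos P m).
Proof. intros H. apply (edge_in_emb P m); auto. apply glue_in_edge. Qed.

Lemma segment_to_glue_edge P m z : segment (tpos P m) (glue_pos P m) z -> edge P m z.
Proof.
  intros [t [Ht ->]]. exists (t / 2). split; [lra|].
  unfold glue_pos; simpl. f_equal; field.
Qed.

Lemma segment_from_glue_edge P m z : segment (glue_pos P m) (tpos P (S m)) z -> edge P m z.
Proof.
  intros [t [Ht ->]]. exists ((1 + t) / 2). split; [lra|].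
  unfold glue_pos; simpl. f_equal; field.
Qed.

Lemma length_subpath P a b : (b < length P)%nat -> (a <= b)%nat ->
  length (subpath P a b) = (S b - a)%nat.
Proof. intros H1 H2. unfold subpath. rewrite length_firstn, length_skipn. lia. Qed.

Lemma tpos_subpath P a b t : (b < length P)%nat -> (a <= b)%nat -> (t <= b - a)%nat ->
  tpos (subpath P a b) t = tpos P (a + t).
Proof.
  intros H1 H2 H3. unfold tpos, Pn, subpath. rewrite nth_firstn.
  destruct (Nat.ltb_spec t (S b - a)); [|lia]. rewrite nth_skipn. reflexivity.
Qed.

Lemma emb_subpath_inv P a b z : (b < length P)%nat -> (a <= b)%nat ->
  emb (subpath P a b) z ->
  (exists m, (a <= m < b)%nat /\ edge P m z) \/ (exists m, (a <= m <= b)%nat /\ z = tpos P m).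
Proof.
  intros H1 H2 [[t [Ht Hs]]|[t [Ht ->]]]; rewrite length_subpath in Ht by auto.
  - left. exists (a + t)%nat. split; [lia|]. unfold edge.
    rewrite !tpos_subpath in Hs by (auto; lia). replace (S (a + t)) with (a + S t)%nat by lia.
    exact Hs.
  - right. exists (a + t)%nat. split; [lia|]. apply tpos_subpath; auto; lia.
Qed.

Lemma emb_subpath_edge P a b m z : (b < length P)%nat -> (a <= m < b)%nat ->
  edge P m z -> emb (subpath P a b) z.
Proof.
  intros H1 H2 E. left. exists (m - a)%nat. rewrite length_subpath by lia. split; [lia|].
  rewrite !tpos_subpath by lia. replace (a + (m - a))%nat with m by lia.
  replace (a + S (m - a))%nat with (S m) by lia. exact E.
Qed.

Lemma emb_subpath_vertex P a b m : (b < length P)%nat -> (a <= m <= b)%nat ->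
  emb (subpath P a b) (tpos P m).
Proof.
  intros H1 H2. right. exists (m - a)%nat. rewrite length_subpath by lia. split; [lia|].
  rewrite !tpos_subpath by lia. replace (a + (m - a))%nat with m by lia. reflexivity.
Qed.

(* The vertices glue_a, P_(a+1), ..., P_b, glue_b; with a north ray added at
   glue_b the rayed polyline on them is the cut c. *)
Definition cut_vertices (P : list tile) (a b m : nat) : point :=
  if Nat.eqb m 0 then glue_pos P a
  else if Nat.leb m (b - a) then tpos P (a + m) else glue_pos P b.

Definition south_cut (P : list tile) (a b : nat) : point -> Prop :=
  rayed_polyline (cut_vertices P a b) (S (b - a)) false.

Lemma cut_vertices_first P a b : cut_vertices P a b 0 = glue_pos P a.
Proof. reflexivity. Qed.

Lemma cut_vertices_inner P a b m : (1 <= m <= b - a)%nat -> cut_vertices P a b m = tpos P (a + m).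
Proof.
  intros H. unfold cut_vertices. destruct (Nat.eqb_spec m 0); [lia|].
  destruct (Nat.leb_spec m (b - a)); [reflexivity|lia].
Qed.

Lemma cut_vertices_last P a b : cut_vertices P a b (S (b - a)) = glue_pos P b.
Proof.
  unfold cut_vertices. destruct (Nat.eqb_spec (S (b - a)) 0); [lia|].
  destruct (Nat.leb_spec (S (b - a)) (b - a)); [lia|reflexivity].
Qed.

Lemma rayed_polyline_cut_vertices P a b up z : (a < b)%nat ->
  rayed_polyline (cut_vertices P a b) (S (b - a)) up z ->
  ray_south (glue_pos P a) z \/ segment (glue_pos P a) (tpos P (S a)) z \/
  (exists e, (S a <= e < b)%nat /\ edge P e z) \/ segment (tpos P b) (glue_pos P b) z \/
  (if up then ray_north (glue_pos P b) z else ray_south (glue_pos P b) z).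
Proof.
  intros Hab [H|[[m [Hm Hs]]|H]].
  - left; exact H.
  - destruct (Nat.eq_dec m 0) as [->|Hm0].
    + right; left. rewrite cut_vertices_first, cut_vertices_inner in Hs by lia.
      replace (a + 1)%nat with (S a) in Hs by lia. exact Hs.
    + destruct (Nat.eq_dec m (b - a)) as [->|Hm1].
      * right; right; right; left. rewrite cut_vertices_last, cut_vertices_inner in Hs by lia.
        replace (a + (b - a))%nat with b in Hs by lia. exact Hs.
      * right; right; left. exists (a + m)%nat. split; [lia|].
        rewrite !cut_vertices_inner in Hs by lia. unfold edge.
        replace (S (a + m)) with (a + S m)%nat by lia. exact Hs.
  - right; right; right; right. rewrite cut_vertices_last in H. exact H.
Qed.

Lemma axis_parallel_cut_vertices P a b : is_path P -> (S b < length P)%nat -> (a < b)%nat ->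
  snd (ppos P (S a)) = snd (ppos P a) -> snd (ppos P (S b)) = snd (ppos P b) ->
  axis_parallel (cut_vertices P a b) (S (b - a)).
Proof.
  intros HP Hb Hab Ea Eb m Hm.
  destruct (Nat.eq_dec m 0) as [->|Hm0].
  - rewrite cut_vertices_first, cut_vertices_inner by lia. right.
    rewrite glue_pos_midpoint, tpos_xy. unfold lattice_midpoint; simpl.
    replace (a + 1)%nat with (S a) by lia. rewrite Ea. field.
  - destruct (Nat.eq_dec m (b - a)) as [->|Hm1].
    + rewrite cut_vertices_last, cut_vertices_inner by lia. right.
      rewrite glue_pos_midpoint, tpos_xy. unfold lattice_midpoint; simpl.
      replace (a + (b - a))%nat with b by lia. rewrite Eb. field.
    + rewrite !cut_vertices_inner by lia. rewrite !tpos_xy.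
      assert (U := path_unit_step P (a + m) HP ltac:(lia)).
      replace (S (a + m)) with (a + S m)%nat in U by lia.
      unfold unit_step in U; simpl.
      destruct U as [[_ ->]|[[_ ->]|[[-> _]|[-> _]]]]; auto.
Qed.

Lemma visible_south_ray_meets_emb sigma P a z : visible_south sigma P a ->
  ray_south (glue_pos P a) z -> emb P z -> z = glue_pos P a.
Proof.
  intros [_ V] [s [Hs ->]] He. destruct (Req_dec s 0) as [->|Hs0].
  - destruct (glue_pos P a); simpl; f_equal; ring.
  - exfalso. apply (proj1 (V s ltac:(lra))). exact He.
Qed.

Lemma points_east_horizontal P m : points_east P m -> snd (ppos P (S m)) = snd (ppos P m).
Proof. intros E. rewrite (ppos_east P m E). reflexivity. Qed.

Lemma visible_north_horizontal sigma P m : visible_north sigma P m ->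
  snd (ppos P (S m)) = snd (ppos P m).
Proof.
  intros [[E|E] _]; [rewrite (ppos_east P m E)|rewrite (ppos_west P m E)]; reflexivity.
Qed.

Lemma IZR_quarter_neq_half (a b : Z) : IZR a + 3/4 <> IZR b + /2.
Proof.
  intros E. assert (A : (0 < b - a < 1)%Z) by (split; apply lt_IZR; rewrite minus_IZR; lra).
  lia.
Qed.

Lemma visible_north_ray_meets_emb sigma P a z : visible_north sigma P a ->
  ray_north (glue_pos P a) z -> emb P z -> z = glue_pos P a.
Proof.
  intros [_ V] [s [Hs ->]] He. destruct (Req_dec s 0) as [->|Hs0].
  - destruct (glue_pos P a); simpl; f_equal; ring.
  - exfalso. apply (proj1 (V s ltac:(lra))). exact He.
Qed.

Lemma glue_on_edge P a e : is_path P -> (S a < length P)%nat -> (S e < length P)%nat ->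
  edge P e (glue_pos P a) -> e = a.
Proof.
  intros HP Ha He E.
  destruct (lt_eq_lt_dec e a) as [[Lt|Eq]|Gt]; [exfalso|exact Eq|exfalso].
  - destruct (path_edges_meet P e a _ HP He Ha Lt E (glue_in_edge P a)) as [_ Z].
    exact (glue_off_lattice P a HP Ha (ppos P a) Z).
  - destruct (path_edges_meet P a e _ HP Ha He Gt (glue_in_edge P a) E) as [_ Z].
    exact (glue_off_lattice P a HP Ha (ppos P e) Z).
Qed.

Lemma ray_north_south_meet (o o' z : point) : ray_north o z -> ray_south o' z -> ray_north o o'.
Proof.
  intros [s [Hs ->]] [s' [Hs' E]]. exists (s + s'). split; [lra|].
  injection E; intros Ey Ex. apply injective_projections; simpl; lra.
Qed.

Lemma ray_north_south_same (o z : point) : ray_north o z -> ray_south o z -> z = o.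
Proof.
  intros [s [Hs ->]] [s' [Hs' E]]. apply (f_equal snd) in E; simpl in E.
  apply injective_projections; simpl; lra.
Qed.

Lemma ray_north_trans (o z w : point) : ray_north o z -> ray_north z w -> ray_north o w.
Proof.
  intros [s [Hs ->]] [s' [Hs' ->]]. exists (s + s'). split; [lra|].
  apply injective_projections; simpl; lra.
Qed.

Lemma ray_north_antisym (o z : point) : ray_north o z -> ray_north z o -> z = o.
Proof.
  intros [s [Hs ->]] [s' [Hs' E]]. apply (f_equal snd) in E; simpl in E.
  apply injective_projections; simpl; lra.
Qed.

Lemma segment_fst_dist (a b z : point) :
  segment a b z -> Rabs (fst z - fst b) <= Rabs (fst a - fst b).
Proof.
  intros [t [Ht ->]]. simpl.
  replace (fst a + t * (fst b - fst a) - fst b) with ((1 - t) * (fst a - fst b)) by ring.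
  rewrite Rabs_mult, (Rabs_right (1 - t)) by lra.
  pose proof (Rabs_pos (fst a - fst b)). nra.
Qed.

Lemma IZR_abs_ge_1 (n : Z) : n <> 0%Z -> 1 <= Rabs (IZR n).
Proof. intros H. rewrite <- abs_IZR. apply IZR_le. lia. Qed.

Lemma emb_subpath_mono P a b a' b' z : (b < length P)%nat -> (a <= a')%nat ->
  (a' <= b')%nat -> (b' <= b)%nat -> emb (subpath P a' b') z -> emb (subpath P a b) z.
Proof.
  intros Hb Ha Hab' Hb' E.
  destruct (emb_subpath_inv P a' b' z ltac:(lia) Hab' E) as [[m [Hm Em]]|[m [Hm ->]]].
  - apply (emb_subpath_edge P a b m); auto; lia.
  - apply emb_subpath_vertex; lia.
Qed.

Lemma lk_shift_ray_north P i j k z : lk_shift P i j k z <-> ray_north (lk_shift0 P i j k) z.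
Proof.
  unfold lk_shift, lk_shift0, translate, ray_north; simpl.
  split; intros [s [Hs E]]; exists s; split; auto.
  - assert (Ex := f_equal fst E). assert (Ey := f_equal snd E). simpl in Ex, Ey.
    apply injective_projections; simpl; lra.
  - subst z. simpl. f_equal; ring.
Qed.

Lemma lk_shift0_xy P i j k : lk_shift0 P i j k =
  (fst (glue_pos P k) + IZR (fst (ppos P i)) - IZR (fst (ppos P j)),
   snd (glue_pos P k) + IZR (snd (ppos P i)) - IZR (snd (ppos P j))).
Proof. unfold lk_shift0, vecJI, tpos, ppos, toR. simpl. f_equal; ring. Qed.

Lemma crossing_parity_along_path u n up P a b : axis_parallel u n -> (a <= b)%nat ->
  (forall e z, (a <= e < b)%nat -> edge P e z -> ~ rayed_polyline u n up z) ->
  crossing_parity u n up (tpos P a) = crossing_parity u n up (tpos P b).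
Proof.
  intros A Hab Hoff. induction b as [|b IH].
  - replace a with 0%nat by lia. reflexivity.
  - destruct (Nat.eq_dec a (S b)) as [->|Ha]; [reflexivity|].
    rewrite IH; [|lia|intros e z He; apply Hoff; lia].
    apply crossing_parity_along_segment; auto. intros z Hz. apply (Hoff b z); [lia|exact Hz].
Qed.

Section Shield.

Variables (sigma P : list tile) (i j k : nat).
Hypotheses (HP : is_path P) (Hij : (i < j)%nat) (Hjk : (j <= k)%nat)
  (Hk : (S k < length P)%nat) (Vi : visible_south sigma P i) (Vj : visible_south sigma P j)
  (Ei : points_east P i) (Ej : points_east P j) (Vk : visible_north sigma P k).

Lemma shield_columns_differ : fst (ppos P i) <> fst (ppos P j).
Proof.
  intros E.
  assert (Gi := glue_pos_east P i Ei). assert (Gj := glue_pos_east P j Ej). rewrite E in Gi.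
  assert (G : glue_pos P i = glue_pos P j).
  { destruct (Rle_dec (IZR (snd (ppos P i))) (IZR (snd (ppos P j)))).
    - apply (visible_south_ray_meets_emb sigma P j _ Vj); [|apply glue_in_emb; lia].
      rewrite Gi, Gj. exists (IZR (snd (ppos P j)) - IZR (snd (ppos P i))).
      split; [lra|]. simpl; f_equal; ring.
    - symmetry. apply (visible_south_ray_meets_emb sigma P i _ Vi); [|apply glue_in_emb; lia].
      rewrite Gi, Gj. exists (IZR (snd (ppos P i)) - IZR (snd (ppos P j))).
      split; [lra|]. simpl; f_equal; ring. }
  apply (glue_pos_inj P) in G; auto; lia.
Qed.

Lemma south_cut_cases z : south_cut P i j z ->
  ray_south (glue_pos P i) z \/ ray_south (glue_pos P j) z \/
  (exists e, (i <= e < j)%nat /\ edge P e z) \/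
  (edge P j z /\ fst z <= IZR (fst (ppos P j)) + /2).
Proof.
  intros Hc.
  destruct (rayed_polyline_cut_vertices P i j false z Hij Hc) as [H|[H|[H|[H|H]]]].
  - left; exact H.
  - right; right; left. exists i. split; [lia|]. apply segment_from_glue_edge; exact H.
  - right; right; left. destruct H as [e [He H]]. exists e. split; [lia|exact H].
  - right; right; right. split; [apply segment_to_glue_edge; exact H|].
    destruct H as [t [Ht ->]]. rewrite (glue_pos_east P j Ej), tpos_xy. simpl. nra.
  - right; left; exact H.
Qed.

Lemma column_off_south_cut z : fst z = IZR (fst (ppos P j)) + 3/4 ->
  (snd z <= IZR (snd (ppos P j)) \/ k = j) ->
  ~ south_cut P i j z.
Proof.
  intros Hx Hy Hc.
  destruct (south_cut_cases z Hc) as [C|[C|[C|C]]].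
  - destruct C as [s [Hs Ez]]. rewrite (glue_pos_east P i Ei) in Ez. rewrite Ez in Hx.
    simpl in Hx. apply (IZR_quarter_neq_half (fst (ppos P j)) (fst (ppos P i))). lra.
  - destruct C as [s [Hs Ez]]. rewrite (glue_pos_east P j Ej) in Ez. rewrite Ez in Hx.
    simpl in Hx. lra.
  - destruct C as [e [He Ee]].
    assert (G := edge_fractional_x P e z (fst (ppos P j)) HP ltac:(lia) Ee ltac:(lra)).
    assert (Ie : emb P (IZR (fst (ppos P j)) + /2, snd z))
      by (rewrite <- G; apply glue_in_emb; lia).
    assert (e = j); [|lia].
    apply (glue_pos_inj P); auto; try lia. rewrite G.
    destruct (Rle_dec (snd z) (IZR (snd (ppos P j)))) as [Below|Above].
    + apply (visible_south_ray_meets_emb sigma P j _ Vj); [|exact Ie].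
      rewrite (glue_pos_east P j Ej).
      exists (IZR (snd (ppos P j)) - snd z). split; [lra|]. simpl; f_equal; ring.
    + destruct Hy as [Hy|Hkj]; [lra|].
      assert (Vj' : visible_north sigma P j) by (rewrite <- Hkj; exact Vk).
      apply (visible_north_ray_meets_emb sigma P j _ Vj'); [|exact Ie].
      rewrite (glue_pos_east P j Ej).
      exists (snd z - IZR (snd (ppos P j))). split; [lra|]. simpl; f_equal; ring.
  - lra.
Qed.

Lemma visible_south_ray_misses_later_edge a e z : visible_south sigma P a ->
  (a < e)%nat -> (S e < length P)%nat -> ray_south (glue_pos P a) z -> ~ edge P e z.
Proof.
  intros Va Hae He R Ez.
  assert (Z := visible_south_ray_meets_emb sigma P a z Va R (edge_in_emb P e z He Ez)).
  subst z. apply glue_on_edge in Ez; auto; lia.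
Qed.

Lemma edge_j_off_south_cut z : edge P j z -> fst z > IZR (fst (ppos P j)) + /2 ->
  ~ south_cut P i j z.
Proof.
  intros Ez Hx Hc.
  destruct (south_cut_cases z Hc) as [C|[C|[C|C]]].
  - exact (visible_south_ray_misses_later_edge i j z Vi Hij ltac:(lia) C Ez).
  - destruct C as [s [Hs Ez']]. rewrite (glue_pos_east P j Ej) in Ez'. rewrite Ez' in Hx.
    simpl in Hx. lra.
  - destruct C as [e [He Ee]].
    destruct (path_edges_meet P e j z HP ltac:(lia) ltac:(lia) ltac:(lia) Ee Ez) as [_ Z].
    rewrite Z, tpos_xy in Hx. simpl in Hx. lra.
  - lra.
Qed.

Lemma later_edge_off_south_cut e z : (j < e)%nat -> (S e < length P)%nat -> edge P e z ->
  ~ south_cut P i j z.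
Proof.
  intros He He' Ez Hc.
  destruct (south_cut_cases z Hc) as [C|[C|[C|[C1 C2]]]].
  - exact (visible_south_ray_misses_later_edge i e z Vi ltac:(lia) He' C Ez).
  - exact (visible_south_ray_misses_later_edge j e z Vj He He' C Ez).
  - destruct C as [e' [He1 Ee]].
    destruct (path_edges_meet P e' e z HP ltac:(lia) He' ltac:(lia) Ee Ez) as [Z _]. lia.
  - destruct (path_edges_meet P j e z HP ltac:(lia) He' He C1 Ez) as [Z1 Z2].
    subst e. rewrite Z2, tpos_xy, (ppos_east P j Ej) in C2. simpl in C2.
    rewrite plus_IZR in C2. lra.
Qed.

Lemma ray_north_k_off_south_cut z : (j < k)%nat -> ray_north (glue_pos P k) z ->
  ~ south_cut P i j z.
Proof.
  intros Hjk' Hr Hc.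
  assert (OnK : emb P z -> z = glue_pos P k)
    by exact (visible_north_ray_meets_emb sigma P k z Vk Hr).
  destruct (south_cut_cases z Hc) as [C|[C|[C|[C _]]]].
  - assert (G : glue_pos P i = glue_pos P k).
    { apply (visible_north_ray_meets_emb sigma P k _ Vk); [|apply glue_in_emb; lia].
      exact (ray_north_south_meet _ _ _ Hr C). }
    apply (glue_pos_inj P) in G; auto; lia.
  - assert (G : glue_pos P j = glue_pos P k).
    { apply (visible_north_ray_meets_emb sigma P k _ Vk); [|apply glue_in_emb; lia].
      exact (ray_north_south_meet _ _ _ Hr C). }
    apply (glue_pos_inj P) in G; auto; lia.
  - destruct C as [e [He Ee]].
    rewrite (OnK (edge_in_emb P e z ltac:(lia) Ee)) in Ee.
    apply glue_on_edge in Ee; auto; lia.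
  - rewrite (OnK (edge_in_emb P j z ltac:(lia) C)) in C.
    apply glue_on_edge in C; auto; lia.
Qed.

Lemma axis_parallel_south_cut : axis_parallel (cut_vertices P i j) (S (j - i)).
Proof.
  apply axis_parallel_cut_vertices; auto; try lia; apply points_east_horizontal; auto.
Qed.

(* From just east of P_j one escapes north without meeting the south cut: up the
   column if k = j, otherwise along the rest of the path and then up the north
   ray of glue k, which the path avoids by visibility. *)
Lemma south_cut_parity_east_of_Pj :
  crossing_parity (cut_vertices P i j) (S (j - i)) false
    (IZR (fst (ppos P j)) + 3/4, IZR (snd (ppos P j))) = false.
Proof.
  set (u := cut_vertices P i j). set (n := S (j - i)).
  set (xj := IZR (fst (ppos P j))). set (yj := IZR (snd (ppos P j))).
  assert (A : axis_parallel u n) by apply axis_parallel_south_cut.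
  destruct (vertices_bounded_y u n) as [Y0 HY0].
  pose proof (Rle_abs yj). pose proof (Rle_abs (snd (glue_pos P k))).
  pose proof (Rmax_l Y0 (Rmax (Rabs yj) (Rabs (snd (glue_pos P k))))).
  pose proof (Rmax_r Y0 (Rmax (Rabs yj) (Rabs (snd (glue_pos P k))))).
  pose proof (Rmax_l (Rabs yj) (Rabs (snd (glue_pos P k)))).
  pose proof (Rmax_r (Rabs yj) (Rabs (snd (glue_pos P k)))).
  set (Y := Rmax Y0 (Rmax (Rabs yj) (Rabs (snd (glue_pos P k))))) in *.
  assert (Top : forall x, crossing_parity u n false (x, Y) = false).
  { intros x. rewrite crossing_parity_north; [reflexivity|].
    intros m Hm. specialize (HY0 m Hm). pose proof (Rle_abs (snd (u m))). simpl. lra. }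
  destruct (Nat.eq_dec k j) as [Hkj|Hkj].
  - rewrite <- (Top (xj + 3/4)) at 2. apply crossing_parity_along_segment; [exact A|].
    intros z [t [Ht ->]]. apply column_off_south_cut; simpl; [unfold xj; ring|right; exact Hkj].
  - rewrite <- (Top (fst (glue_pos P k))) at 2.
    transitivity (crossing_parity u n false (tpos P (S j))).
    { apply crossing_parity_along_segment; [exact A|]. intros z [t [Ht ->]].
      rewrite tpos_xy, (ppos_east P j Ej); simpl. rewrite plus_IZR. fold xj yj.
      apply edge_j_off_south_cut; simpl; [|unfold xj in *; nra].
      exists ((3 + t) / 4). split; [lra|].
      rewrite !tpos_xy, (ppos_east P j Ej). simpl. rewrite plus_IZR. fold xj yj.
      apply injective_projections; simpl; field. }
    transitivity (crossing_parity u n false (tpos P k)).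
    { apply crossing_parity_along_path; [exact A|lia|].
      intros e z He. apply later_edge_off_south_cut; lia. }
    transitivity (crossing_parity u n false (glue_pos P k)).
    { apply crossing_parity_along_segment; [exact A|]. intros z Hz.
      apply (later_edge_off_south_cut k); [lia|lia|]. apply segment_to_glue_edge; exact Hz. }
    apply crossing_parity_along_segment; [exact A|]. intros z [t [Ht ->]].
    apply ray_north_k_off_south_cut; [lia|].
    exists (t * (Y - snd (glue_pos P k))). split; [nra|].
    apply injective_projections; simpl; ring.
Qed.

(* If P_i were east of P_j, the column just east of P_j would lead, off the
   south cut, from its far south, where the crossing parity is odd, to the point
   just east of P_j, where it is even. *)
Lemma shield_west : (fst (ppos P i) < fst (ppos P j))%Z.
Proof.
  destruct (Z_lt_le_dec (fst (ppos P i)) (fst (ppos P j))) as [|Hle]; [assumption|exfalso].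
  pose proof shield_columns_differ.
  assert (Hlt : IZR (fst (ppos P j)) + 1 <= IZR (fst (ppos P i)))
    by (rewrite <- plus_IZR; apply IZR_le; lia).
  set (u := cut_vertices P i j). set (n := S (j - i)).
  set (xj := IZR (fst (ppos P j))) in *. set (yj := IZR (snd (ppos P j))).
  destruct (vertices_bounded_y u n) as [Y0 HY0].
  assert (Hyj : Rabs yj < Y0).
  { specialize (HY0 (j - i)%nat ltac:(unfold n; lia)). unfold u in HY0.
    rewrite cut_vertices_inner in HY0 by lia. replace (i + (j - i))%nat with j in HY0 by lia.
    exact HY0. }
  apply Rabs_def2 in Hyj.
  assert (Bottom : crossing_parity u n false (xj + 3/4, - Y0) = true).
  { rewrite crossing_parity_south.
    2: { intros m Hm. specialize (HY0 m Hm). apply Rabs_def2 in HY0. simpl. lra. }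
    unfold u, n. rewrite cut_vertices_first, cut_vertices_last,
      (glue_pos_east P i Ei), (glue_pos_east P j Ej).
    simpl. fold xj. unfold Rltb.
    destruct (Rlt_dec (xj + 3/4) (IZR (fst (ppos P i)) + /2)); [|lra].
    destruct (Rlt_dec (xj + 3/4) (xj + /2)); [lra|]. reflexivity. }
  assert (Column : crossing_parity u n false (xj + 3/4, - Y0) =
                   crossing_parity u n false (xj + 3/4, yj)).
  { apply crossing_parity_along_segment; [apply axis_parallel_south_cut|].
    intros z [t [Ht ->]].
    apply column_off_south_cut; simpl; [unfold xj; ring|left; unfold yj in *; nra]. }
  unfold u, n, xj, yj in *. rewrite Column, south_cut_parity_east_of_Pj in Bottom.
  discriminate.
Qed.

Lemma rayed_polyline_cut z :
  rayed_polyline (cut_vertices P i k) (S (k - i)) true z -> cut P i k z.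
Proof.
  intros C.
  destruct (rayed_polyline_cut_vertices P i k true z ltac:(lia) C) as [H|[H|[H|[H|H]]]];
    unfold cut.
  - left; exact H.
  - right; left; exact H.
  - right; right; left. destruct H as [e [He Ee]]. apply (emb_subpath_edge P (S i) k e); auto; lia.
  - right; right; right; left; exact H.
  - right; right; right; right; exact H.
Qed.

Hypothesis shift_meets_path :
  forall z, emb (subpath P i k) z -> lk_shift P i j k z -> z = lk_shift0 P i j k.

Lemma shifted_ray_meets_cut z : lk_shift P i j k z -> cut P i k z -> z = lk_shift0 P i j k.
Proof.
  intros L C. assert (Lz := proj1 (lk_shift_ray_north P i j k z) L).
  assert (Far : 1 <= Rabs (fst z - fst (glue_pos P k))).
  { destruct Lz as [s [_ ->]]. rewrite lk_shift0_xy. simpl.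
    replace (_ - _) with (IZR (fst (ppos P i) - fst (ppos P j))) by (rewrite minus_IZR; ring).
    apply IZR_abs_ge_1. pose proof shield_columns_differ. lia. }
  destruct C as [C|[C|[C|[C|C]]]].
  - assert (G : glue_pos P j = glue_pos P k).
    { apply (visible_north_ray_meets_emb sigma P k _ Vk); [|apply glue_in_emb; lia].
      destruct (ray_north_south_meet _ _ _ Lz C) as [r [Hr Er]]. exists r. split; [exact Hr|].
      rewrite lk_shift0_xy, (glue_pos_east P i Ei) in Er. rewrite (glue_pos_east P j Ej).
      assert (Ex := f_equal fst Er). assert (Ey := f_equal snd Er). simpl in Ex, Ey.
      apply injective_projections; simpl; lra. }
    assert (E0 : lk_shift0 P i j k = glue_pos P i).
    { rewrite lk_shift0_xy, <- G, (glue_pos_east P i Ei), (glue_pos_east P j Ej).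
      simpl. f_equal; ring. }
    rewrite E0 in Lz |- *. exact (ray_north_south_same _ _ Lz C).
  - apply shift_meets_path; [|exact L].
    apply (emb_subpath_edge P i k i); [lia|lia|apply segment_from_glue_edge; exact C].
  - apply shift_meets_path; [|exact L].
    apply (emb_subpath_mono P i k (S i) k); auto; lia.
  - exfalso. pose proof (segment_fst_dist _ _ _ C).
    assert (Rabs (fst (tpos P k) - fst (glue_pos P k)) = /2).
    { rewrite tpos_xy. destruct Vk as [[Ek|Ek] _];
        [rewrite (glue_pos_east P k Ek)|rewrite (glue_pos_west P k Ek)]; simpl;
        [rewrite Rabs_left|rewrite Rabs_right]; lra. }
    lra.
  - exfalso. destruct C as [s [_ ->]]. simpl in Far.
    rewrite Rminus_diag, Rabs_R0 in Far. lra.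
Qed.

(* Climb the shifted ray above all of the cut; it meets the cut at most at its
   origin, and up there it lies west of the north ray of glue k. *)
Lemma cut_parity_on_shifted_ray z : lk_shift P i j k z -> ~ cut P i k z ->
  crossing_parity (cut_vertices P i k) (S (k - i)) true z = true.
Proof.
  intros L Cz.
  set (u := cut_vertices P i k). set (n := S (k - i)).
  assert (A : axis_parallel u n).
  { apply axis_parallel_cut_vertices; auto; try lia;
      [apply points_east_horizontal|apply (visible_north_horizontal sigma)]; auto. }
  destruct (vertices_bounded_y u n) as [Y0 HY0].
  pose proof (Rmax_l Y0 (snd z + 1)). pose proof (Rmax_r Y0 (snd z + 1)).
  set (Y := Rmax Y0 (snd z + 1)) in *.
  transitivity (crossing_parity u n true (fst z, Y)).
  - replace z with (fst z, snd z) at 1 by (destruct z; reflexivity).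
    apply crossing_parity_along_segment; [exact A|].
    intros w Hw Cw. apply rayed_polyline_cut in Cw.
    assert (Up : ray_north z w).
    { destruct Hw as [t [Ht ->]]. exists (t * (Y - snd z)). split; [nra|].
      apply injective_projections; simpl; ring. }
    assert (Lz := proj1 (lk_shift_ray_north P i j k z) L).
    assert (Lw : lk_shift P i j k w) by (apply lk_shift_ray_north; eapply ray_north_trans; eauto).
    assert (E := shifted_ray_meets_cut w Lw Cw). subst w.
    apply Cz. rewrite <- (ray_north_antisym _ _ Up Lz). exact Cw.
  - rewrite crossing_parity_north.
    2: { intros m Hm. specialize (HY0 m Hm). pose proof (Rle_abs (snd (u m))). simpl. lra. }
    unfold u, n. rewrite cut_vertices_last.
    change (Rltb (fst z) (fst (glue_pos P k)) = true). unfold Rltb.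
    destruct (Rlt_dec (fst z) (fst (glue_pos P k))) as [|Hge]; [reflexivity|exfalso].
    destruct (proj1 (lk_shift_ray_north P i j k z) L) as [s [_ Ez]].
    apply (f_equal fst) in Ez. rewrite lk_shift0_xy in Ez. cbn [fst] in Ez.
    pose proof (IZR_lt _ _ shield_west). lra.
Qed.

Lemma shifted_ray_workspace_in_cut z :
  lk_shift P i j k z -> workspace (cut P i k) z -> cut P i k z.
Proof.
  intros L [C|[X0 [HX [f [Hf [f0 [f1 Hoff]]]]]]]; [exact C|exfalso].
  set (u := cut_vertices P i k). set (n := S (k - i)).
  assert (A : axis_parallel u n).
  { apply axis_parallel_cut_vertices; auto; try lia;
      [apply points_east_horizontal|apply (visible_north_horizontal sigma)]; auto. }
  assert (Par := crossing_parity_along_curve u n true f A Hf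
                   (fun t Ht C => Hoff t Ht (rayed_polyline_cut _ C))).
  rewrite f0, f1, (crossing_parity_east u n true (X0, 0)) in Par.
  - rewrite cut_parity_on_shifted_ray in Par; [discriminate|exact L|].
    rewrite <- f1. apply Hoff; lra.
  - intros m Hm. apply Rlt_le, HX, rayed_polyline_cut, vertex_in_rayed_polyline; exact Hm.
Qed.

End Shield.

Theorem mainTheorem5 (T : list tiletype) (sigma : list tile) (P : list tile)
  (i j k : nat) :
  valid_seed sigma ->
  producible_path T sigma P ->
  shield sigma P i j k ->
  (forall z, (lk_shift P i j k z /\ workspace (cut P i k) z) <->
             (lk_shift P i j k z /\ cut P i k z)) /\
  (forall z, lk_shift P i j k z /\ cut P i k z -> z = lk_shift0 P i j k).
Proof.
  intros _ [_ [HP _]] [Hij [Hjk [Hk [_ [Vi [Vj [Ei [Ej [Vk Hshift]]]]]]]]].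
  split.
  - intros z; split; intros [L C]; split; try exact L.
    + eapply shifted_ray_workspace_in_cut; eauto.
    + left; exact C.
  - intros z [L C]. eapply shifted_ray_meets_cut; eauto.
Qed.
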